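(* Let $\mathbb{K}$ be a field, let $P_1, P_2 \in \mathbb{K}[X]$ be irreducible, let $n > 1$, and let $f : \mathbb{K}[X]/(P_1) \to \mathbb{K}[X]/(P_2)$ be a ring isomorphism stabilizing $\mathbb{K}$. Then the ring homomorphism $f_{X,n} : \mathbb{K}[X]/(P_1^n) \to \mathbb{K}[X]/(P_2^n)$ is an isomorphism (stabilizing $\mathbb{K}$) if and only if $Q_f' \neq 0$.
   Context: A ring homomorphism $f : A \to B$ between $\mathbb{K}$-algebras stabilizes $\mathbb{K}$ if there is a field automorphism $\sigma_f$ of $\mathbb{K}$ with $f(a) = \sigma_f(a)$ for all $a \in \mathbb{K}$. For a field automorphism $\sigma$ of $\mathbb{K}$, $\sigma^X$ is the ring automorphism of $\mathbb{K}[X]$ applying $\sigma$ to coefficients; $A\circ Q$ denotes $A(Q(X))$; $'$ denotes the formal derivative. For a ring isomorphism $f : \mathbb{K}[X]/(P_1) \to \mathbb{K}[X]/(P_2)$ stabilizing $\mathbb{K}$: $Q_f$ is the unique polynomial of degree $< \deg P_2$ such that $f$ sends the class of $X$ to the class of $Q_f$, and $f_{X,n} : \mathbb{K}[X]/(P_1^n) \to \mathbb{K}[X]/(P_2^n)$ is the well-defined ring homomorphism sending the class of $P$ to the class of $\sigma_f^X(P)\circ Q_f$. *)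

From HB Require Import structures.
From mathcomp Require Import all_boot all_order all_algebra.
Set Implicit Arguments. Unset Strict Implicit. Unset Printing Implicit Defensive.
Import GRing.Theory.
Local Open Scope ring_scope.

(* The ideal (P) of K[X] equals (P / lead_coef P) for P != 0; mathcomp's
   quotient {poly %/ h} requires a monic h, so we quotient by the monic
   associate of P. *)
Definition monicize (K : fieldType) (P : {poly K}) : {poly K} :=
  (lead_coef P)^-1 *: P.

Notation KXmod P := {poly %/ monicize P}.

Definition cstK (K : fieldType) (P : {poly K}) (a : K) : KXmod P := qpolyC _ a.

Definition ring_iso (A B : comNzRingType) (g : A -> B) : Prop :=
  [/\ zmod_morphism g, monoid_morphism g & bijective g].

Definition field_aut (K : fieldType) (s : K -> K) : Prop :=
  [/\ zmod_morphism s, monoid_morphism s & bijective s].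

Definition stabilizes_via (K : fieldType) (P1 P2 : {poly K})
  (g : KXmod P1 -> KXmod P2) (s : K -> K) : Prop :=
  field_aut s /\ forall a : K, g (cstK P1 a) = cstK P2 (s a).

Definition stabilizes (K : fieldType) (P1 P2 : {poly K})
  (g : KXmod P1 -> KXmod P2) : Prop :=
  exists s : K -> K, stabilizes_via g s.

Definition Qf (K : fieldType) (P1 P2 : {poly K}) (f : KXmod P1 -> KXmod P2)
  : {poly K} := val (f 'qX).

Definition fXn (K : fieldType) (P1 P2 : {poly K}) (n : nat)
  (f : KXmod P1 -> KXmod P2) (s : K -> K)
  (p : KXmod (P1 ^+ n)) : KXmod (P2 ^+ n) :=
  in_qpoly _ ((map_poly s (val p)) \Po Qf f).
Arguments fXn {K P1 P2} n f s p.

From HB Require Import structures.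
From mathcomp Require Import all_boot all_order all_algebra.
From mathcomp Require Import ring.
Set Implicit Arguments. Unset Strict Implicit. Unset Printing Implicit Defensive.
Import GRing.Theory.
Local Open Scope ring_scope.

(* Write Q := Q_f and M := sigma(P1) \Po Q. Since f sends the class of A to
   that of sigma(A) \Po Q, we get P2 %| sigma(A) \Po Q iff P1 %| A; in
   particular M = H * P2.
   If Q' = 0, then P2 ^+ 2 %| sigma(A) \Po Q - X is impossible, as P2 would
   divide the derivative -1: the class of X has no preimage under f_{X,n}.
   If Q' <> 0, then P2 ^+ 2 does not divide M: otherwise P2 divides
   M' = (sigma(P1') \Po Q) * Q', forcing P1' = 0, and a Taylor expansion of
   P1 at a preimage h = X + V * P1 of the class of X gives P1 ^+ 2 %| P1.
   So H is prime to P2 and M ^+ k = H ^+ k * P2 ^+ k, which yields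
   P2 ^+ k %| sigma(A) \Po Q iff P1 ^+ k %| A (injectivity), and lets one
   lift preimages from modulo P2 ^+ k to modulo P2 ^+ k.+1 (surjectivity). *)

Section QpolyMonicize.
Variable K : fieldType.
Implicit Types P A B : {poly K}.

Lemma monicize_eqp P : P != 0 -> monicize P %= P.
Proof. by move=> P0; rewrite /monicize eqp_scale // invr_eq0 lead_coef_eq0. Qed.

Lemma mk_monic_monicize P : (1 < size P)%N -> mk_monic (monicize P) = monicize P.
Proof.
move=> sP; have P0 : P != 0 by rewrite -size_poly_gt0 ltnW.
have monicP : monicize P \is monic by rewrite monicE lead_coefZ mulVf ?lead_coef_eq0.
by rewrite /mk_monic (eqp_size (monicize_eqp P0)) sP monicP.
Qed.

Variable P : {poly K}.
Hypothesis sP : (1 < size P)%N.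

Lemma in_qpoly_monicizeE A : val (in_qpoly (monicize P) A) = A %% monicize P.
Proof.
rewrite /= mk_monic_monicize // Pdiv.IdomainMonic.modpE //.
by rewrite -(mk_monic_monicize sP) monic_mk_monic.
Qed.

Lemma in_qpoly_eq0 A : (in_qpoly (monicize P) A == 0) = (P %| A).
Proof.
have P0 : P != 0 by rewrite -size_poly_gt0 ltnW.
by rewrite -(eqp_dvdl _ (monicize_eqp P0)) -val_eqE in_qpoly_monicizeE.
Qed.

Lemma eq_in_qpoly A B :
  (in_qpoly (monicize P) A == in_qpoly (monicize P) B) = (P %| A - B).
Proof. by rewrite -subr_eq0 -in_qpoly_eq0 raddfB. Qed.

Lemma size_qpoly (x : KXmod P) : (size (val x) < size P)%N.
Proof.
have P0 : P != 0 by rewrite -size_poly_gt0 ltnW.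
have <- : size (mk_monic (monicize P)) = size P.
  by rewrite mk_monic_monicize // (eqp_size (monicize_eqp P0)).
exact: size_mk_monic.
Qed.

End QpolyMonicize.

Section QpolyGeneric.
Variables (R : comNzRingType) (h : {poly R}).

Lemma in_qpoly_val (x : {poly %/ h}) : in_qpoly h (val x) = x.
Proof. by apply: val_inj; rewrite /= Pdiv.Ring.rmodp_small // size_mk_monic. Qed.

Lemma in_qpolyC c : in_qpoly h c%:P = qpolyC h c.
Proof.
apply: val_inj; rewrite /= Pdiv.Ring.rmodp_small //.
by rewrite size_polyC (leq_ltn_trans (leq_b1 _)) // size_mk_monic_gt1.
Qed.

Lemma in_qpoly_comp B Z :
  in_qpoly h (B \Po Z) = (map_poly (qpolyC h) B).[in_qpoly h Z].
Proof.
rewrite /comp_poly -horner_map /= -map_poly_comp.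
by congr (_.[_]); apply: eq_map_poly => c /=; rewrite in_qpolyC.
Qed.

End QpolyGeneric.

Section PolyDivisibility.
Variable K : fieldType.
Implicit Types A D P Y Z W : {poly K}.

Lemma dvdp_sub_comp A Z W : Z - W %| (A \Po Z) - (A \Po W).
Proof.
elim/poly_ind: A => [|A c IH]; first by rewrite !comp_poly0 subrr dvdp0.
rewrite !comp_polyD !comp_polyM !comp_polyX !comp_polyC.
have -> : (A \Po Z) * Z + c%:P - ((A \Po W) * W + c%:P) =
   ((A \Po Z) - (A \Po W)) * Z + (A \Po W) * (Z - W) by ring.
by apply: dvdp_add; [apply: dvdp_mulr | apply: dvdp_mull].
Qed.

Lemma dvdp_taylor2 A Y : Y ^+ 2 %| (A \Po ('X + Y)) - A - Y * A^`().
Proof.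
elim/poly_ind: A => [|A c IH]; first by rewrite comp_poly0 deriv0 !subrr mulr0 subrr dvdp0.
rewrite derivMXaddC comp_polyD comp_polyM comp_polyX comp_polyC.
have -> : (A \Po ('X + Y)) * ('X + Y) + c%:P - (A * 'X + c%:P) - Y * (A + A^`() * 'X)
  = ((A \Po ('X + Y)) - A - Y * A^`()) * ('X + Y) + Y ^+ 2 * A^`() by ring.
by apply: dvdp_add; apply: dvdp_mulr.
Qed.

Lemma dvdp_deriv_sqr P D : P ^+ 2 %| D -> P %| D^`().
Proof.
case/dvdpP => E ->; rewrite derivM expr2 derivM.
have -> : E^`() * (P * P) + E * (P^`() * P + P * P^`()) =
  (E^`() * P + E * P^`() *+ 2) * P by ring.
exact: dvdp_mull.
Qed.

Lemma dvdp_deriv_eq0 P : P %| P^`() -> P^`() = 0.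
Proof.
have [->|P0] := eqVneq P 0; first by rewrite deriv0.
by apply: contraTeq => P'0; rewrite gtNdvdp ?lt_size_deriv.
Qed.

Lemma irredp_dvdpM P A B : irreducible_poly P -> P %| A * B -> P %| A \/ P %| B.
Proof.
move=> irrP PAB; have [PB|nPB] := boolP (P %| B); first by right.
by left; rewrite -(Gauss_dvdpl _ (_ : coprimep P B)) ?irreducible_poly_coprime.
Qed.

Lemma irredp_ndvdp1 P : irreducible_poly P -> ~~ (P %| 1).
Proof. by case=> sP _; rewrite dvdp1 neq_ltn sP orbT. Qed.

Lemma size_irredp_exp P n : irreducible_poly P -> (0 < n)%N -> (1 < size (P ^+ n))%N.
Proof.
move=> [sP _] n0; rewrite -subn_gt0 subn1 size_exp muln_gt0 n0 -subn1 subn_gt0.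
by rewrite andbT.
Qed.

End PolyDivisibility.

Section InducedMap.
Variables (K : fieldType) (P1 P2 : {poly K}).
Hypotheses (irr1 : irreducible_poly P1) (irr2 : irreducible_poly P2).
Variable f : {rmorphism KXmod P1 -> KXmod P2}.
Hypothesis f_bij : bijective f.
Variables s t : {rmorphism K -> K}.
Hypotheses (stK : cancel s t) (tsK : cancel t s).
Hypothesis f_cst : forall a, f (cstK P1 a) = cstK P2 (s a).

Let Q := val (f 'qX).
Local Notation sigma := (map_poly s).
Local Notation tau := (map_poly t).
Let M := sigma P1 \Po Q.

Let sP1 : (1 < size P1)%N. Proof. by case: irr1. Qed.
Let sP2 : (1 < size P2)%N. Proof. by case: irr2. Qed.

Lemma f_in_qpoly A :
  f (in_qpoly (monicize P1) A) = in_qpoly (monicize P2) (sigma A \Po Q).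
Proof.
rewrite -{1}(comp_polyXr A) !in_qpoly_comp -horner_map /= -map_poly_comp.
rewrite in_qpoly_val -map_poly_comp; congr (_.[_]).
by apply: eq_map_poly => c /=; rewrite -[qpolyC _ c]/(cstK P1 c) f_cst.
Qed.

Lemma dvdp_map_compQ A : (P2 %| sigma A \Po Q) = (P1 %| A).
Proof.
rewrite -!in_qpoly_eq0 // -f_in_qpoly -(rmorph0 f).
exact: (inj_eq (bij_inj f_bij)).
Qed.

Lemma dvdp_M : P2 %| M.
Proof. by rewrite dvdp_map_compQ dvdpp. Qed.

Lemma map_compQ_surj_mod B : exists A, P2 %| (sigma A \Po Q) - B.
Proof.
case: f_bij => g _ gK; exists (val (g (in_qpoly (monicize P2) B))).
by rewrite -eq_in_qpoly // -f_in_qpoly in_qpoly_val gK.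
Qed.

Lemma map_compQ_mulXn A k : sigma (P1 ^+ k * A) \Po Q = M ^+ k * (sigma A \Po Q).
Proof. by rewrite rmorphM rmorphXn comp_polyM rmorphXn. Qed.

Lemma dvdp_exp_map_compQ k A : P1 ^+ k %| A -> P2 ^+ k %| sigma A \Po Q.
Proof.
by case/dvdpP => E ->; rewrite mulrC map_compQ_mulXn dvdp_mulr ?dvdp_exp2r ?dvdp_M.
Qed.

(* [c] represents the preimage of the class of [X], hence [tau Y \Po c] that of
   the class of [Y]. *)
Lemma exists_map_compQ_inverse :
  exists c, forall Y, P2 %| sigma (tau Y \Po c) \Po Q - Y.
Proof.
have [c Xc] := map_compQ_surj_mod 'X; exists c => Y.
rewrite map_comp_poly map_polyK ?rmorph0 // -comp_polyA -{2}(comp_polyXr Y).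
exact: dvdp_trans Xc (dvdp_sub_comp _ _ _).
Qed.

Lemma sqr_dvdp_M_deriv_eq0 : Q^`() != 0 -> P2 ^+ 2 %| M -> P1^`() = 0.
Proof.
move=> Q'0 /dvdp_deriv_sqr; rewrite /M deriv_comp deriv_map.
case/(irredp_dvdpM irr2) => [|P2Q']; first by rewrite dvdp_map_compQ => /dvdp_deriv_eq0.
have Q0 : Q != 0 by apply: contraNneq Q'0 => ->; rewrite deriv0.
move: P2Q'; rewrite gtNdvdp // (ltn_trans (lt_size_deriv Q0)) //.
exact: size_qpoly.
Qed.

Lemma sqr_ndvdp_M_of_deriv_eq0 : P1^`() = 0 -> ~~ (P2 ^+ 2 %| M).
Proof.
move=> P1'0; apply/negP => /dvdpP [E ME].
have [c inv_c] := exists_map_compQ_inverse.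
pose h := tau Q \Po c.
have /dvdpP [V hE] : P1 %| h - 'X.
  by rewrite -dvdp_map_compQ rmorphB /= map_polyX comp_polyB comp_polyX inv_c.
have taylor : P1 ^+ 2 %| (P1 \Po h) - P1.
  have := dvdp_taylor2 P1 (V * P1); rewrite -hE subrKC P1'0 mulr0 subr0.
  by apply: dvdp_trans; rewrite hE exprMn dvdp_mull.
have P1h : P1 ^+ 2 %| P1 \Po h.
  have -> : P1 \Po h = tau M \Po c by rewrite comp_polyA map_comp_poly map_polyK ?rmorph0.
  rewrite ME rmorphM rmorphXn /= rmorphM rmorphXn /= dvdp_mull // dvdp_exp2r //.
  by rewrite -dvdp_map_compQ -(dvdp_subl _ (dvdpp P2)) inv_c.
move: (dvdp_sub P1h taylor); rewrite opprB addrC subrK.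
by rewrite expr2 -{3}(mulr1 P1) dvdp_mul2l ?irredp_neq0 // (negPf (irredp_ndvdp1 irr1)).
Qed.

Lemma sqr_ndvdp_M : Q^`() != 0 -> ~~ (P2 ^+ 2 %| M).
Proof.
move=> Q'0; apply/negP => P2M.
by move/negP: (sqr_ndvdp_M_of_deriv_eq0 (sqr_dvdp_M_deriv_eq0 Q'0 P2M)).
Qed.

Variable n : nat.
Hypothesis n_gt1 : (1 < n)%N.

Let sPn1 : (1 < size (P1 ^+ n))%N. Proof. exact: size_irredp_exp (ltnW n_gt1). Qed.
Let sPn2 : (1 < size (P2 ^+ n))%N. Proof. exact: size_irredp_exp (ltnW n_gt1). Qed.

Local Notation F := (fXn n f s).

Lemma fXn_in_qpoly A :
  F (in_qpoly (monicize (P1 ^+ n)) A) = in_qpoly (monicize (P2 ^+ n)) (sigma A \Po Q).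
Proof.
apply/eqP; rewrite eq_in_qpoly // -comp_polyB -rmorphB dvdp_exp_map_compQ //.
by rewrite -eq_in_qpoly // in_qpoly_val.
Qed.

Lemma fXn_zmod_morphism : zmod_morphism F.
Proof.
move=> x y; rewrite -[x]in_qpoly_val -[y]in_qpoly_val -raddfB !fXn_in_qpoly.
by rewrite rmorphB comp_polyB raddfB.
Qed.

Lemma fXn_monoid_morphism : monoid_morphism F.
Proof.
split; first by rewrite -in_qpoly1 fXn_in_qpoly rmorph1 comp_polyC in_qpoly1.
move=> x y; rewrite -[x]in_qpoly_val -[y]in_qpoly_val -in_qpolyM !fXn_in_qpoly.
by rewrite rmorphM comp_polyM in_qpolyM.
Qed.

Lemma fXn_cst a : F (cstK (P1 ^+ n) a) = cstK (P2 ^+ n) (s a).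
Proof. by rewrite /cstK -!in_qpolyC fXn_in_qpoly map_polyC comp_polyC. Qed.

Lemma fXn_qX_notin_image : Q^`() = 0 -> forall p, F p != 'qX.
Proof.
move=> Q'0 p; rewrite -[p]in_qpoly_val fXn_in_qpoly eq_in_qpoly //.
apply: contra (irredp_ndvdp1 irr2) => P2n_dvd.
have /dvdp_deriv_sqr : P2 ^+ 2 %| sigma (val p) \Po Q - 'X.
  exact: dvdp_trans (dvdp_exp2l _ n_gt1) P2n_dvd.
by rewrite derivB deriv_comp Q'0 mulr0 derivX sub0r dvdpNr.
Qed.

Section NonzeroDerivative.
Hypothesis Q'0 : Q^`() != 0.

Let H := M %/ P2.
Let MH : M = H * P2. Proof. by rewrite divpK ?dvdp_M. Qed.

Lemma coprimep_P2_H : coprimep P2 H.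
Proof.
rewrite irreducible_poly_coprime //; apply: contra (sqr_ndvdp_M Q'0).
by rewrite MH expr2 dvdp_mul2r ?irredp_neq0.
Qed.

Lemma dvdp_exp_map_compQP k A : (P2 ^+ k %| sigma A \Po Q) = (P1 ^+ k %| A).
Proof.
apply/idP/idP => [|]; last exact: dvdp_exp_map_compQ.
elim: k => [|k IHk] P2k1; first by rewrite expr0 dvd1p.
have /dvdpP [E AE] := IHk (dvdp_trans (dvdp_exp2l _ (leqnSn k)) P2k1).
move: P2k1; rewrite AE [E * _]mulrC map_compQ_mulXn MH exprMn -mulrA mulrCA exprSr.
rewrite dvdp_mul2l ?expf_neq0 ?irredp_neq0 // Gauss_dvdpr ?coprimep_expr ?coprimep_P2_H //.
rewrite dvdp_map_compQ => P1E.
by rewrite exprSr dvdp_mul2l ?expf_neq0 ?irredp_neq0.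
Qed.

(* Hensel lifting: replacing [A] by [A + P1 ^+ k * D] adds
   [(H * P2) ^+ k * (sigma D \Po Q)], and [H ^+ k] is invertible modulo [P2]. *)
Lemma map_compQ_surj_modXn k B : exists A, P2 ^+ k %| B - (sigma A \Po Q).
Proof.
elim: k B => [|k IHk] B; first by exists 0; rewrite expr0 dvd1p.
have [A /dvdpP [T BA]] := IHk B.
have [[U V] /= UV] := Bezout_eq1_coprimepP _ _ (coprimep_expr k coprimep_P2_H).
have [D DVT] := map_compQ_surj_mod (V * T).
exists (A + P1 ^+ k * D).
rewrite rmorphD comp_polyD map_compQ_mulXn MH exprMn.
have -> : B - ((sigma A \Po Q) + H ^+ k * P2 ^+ k * (sigma D \Po Q)) =
    P2 ^+ k * (T * U * P2 - H ^+ k * ((sigma D \Po Q) - V * T))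
    + T * P2 ^+ k * (1 - (U * P2 + V * H ^+ k)).
  by rewrite -[B](subrK (sigma A \Po Q)) BA; ring.
rewrite UV subrr mulr0 addr0 exprSr dvdp_mul2l ?expf_neq0 ?irredp_neq0 //.
by rewrite dvdp_sub ?dvdp_mull.
Qed.

Lemma fXn_bijective : bijective F.
Proof.
have F_surj y : exists p, F p == y.
  have [A P2nA] := map_compQ_surj_modXn n (val y).
  exists (in_qpoly (monicize (P1 ^+ n)) A).
  by rewrite fXn_in_qpoly -[y in _ == y]in_qpoly_val eq_in_qpoly // -dvdpNr opprB.
have F_inj : injective F.
  move=> x y /eqP; apply: contraTeq.
  rewrite -[x]in_qpoly_val -[y]in_qpoly_val !fXn_in_qpoly !eq_in_qpoly //.
  by rewrite -comp_polyB -rmorphB dvdp_exp_map_compQP.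
exists (fun y => xchoose (F_surj y)) => [x|y]; last exact/eqP/(xchooseP (F_surj y)).
by apply: F_inj; apply/eqP/(xchooseP (F_surj (F x))).
Qed.

End NonzeroDerivative.
End InducedMap.

Theorem mainTheorem13 (K : fieldType) (P1 P2 : {poly K}) (n : nat)
  (f : KXmod P1 -> KXmod P2) (s : K -> K) :
  irreducible_poly P1 -> irreducible_poly P2 -> (1 < n)%N ->
  ring_iso f -> stabilizes_via f s ->
  (ring_iso (fXn n f s) /\ stabilizes (fXn n f s)) <-> (Qf f)^`() != 0.
Proof.
move=> irr1 irr2 n_gt1 [f_zmod f_monoid f_bij] [[s_zmod s_monoid [t sK tK]] f_cst].
pose fM : {rmorphism KXmod P1 -> KXmod P2} := HB.pack f
  (GRing.isZmodMorphism.Build _ _ f f_zmod) (GRing.isMonoidMorphism.Build _ _ f f_monoid).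
pose sM : {rmorphism K -> K} := HB.pack s
  (GRing.isZmodMorphism.Build _ _ s s_zmod) (GRing.isMonoidMorphism.Build _ _ s s_monoid).
pose tM : {rmorphism K -> K} := HB.pack t
  (GRing.isZmodMorphism.Build _ _ t (can2_zmod_morphism (f := sM) sK tK))
  (GRing.isMonoidMorphism.Build _ _ t (can2_monoid_morphism (f := sM) sK tK)).
change (fXn n f s) with (fXn n fM sM); change (Qf f) with (val (fM 'qX)).
split=> [[[_ _ [g _ gK]] _] | Q'0].
  apply/eqP => Q'0.
  have := fXn_qX_notin_image irr1 irr2 (f := fM) f_bij (s := sM) f_cst n_gt1 Q'0 (g 'qX).
  by rewrite gK eqxx.
split; first split.
- exact: (fXn_zmod_morphism irr1 irr2 (f := fM) f_bij (s := sM) f_cst n_gt1).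
- exact: (fXn_monoid_morphism irr1 irr2 (f := fM) f_bij (s := sM) f_cst n_gt1).
- exact: (fXn_bijective irr1 irr2 (f := fM) f_bij (s := sM) (t := tM) sK tK f_cst n_gt1 Q'0).
- exists s; split; first by split=> //; exists t.
  exact: (fXn_cst irr1 irr2 (f := fM) f_bij (s := sM) f_cst n_gt1).
Qed.
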